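(* Consider the system $x_{k+1}=F(x_k,u_k,w_k,v_k)$, $y_k=H(x_k,u_k,w_k,v_k)$ with $x_k\in\mathbb{X}$, $u_k\in\mathbb{U}$, $w_k\in\mathbb{W}$, $v_k\in\mathbb{V}$, $y_k\in\mathbb{Y}$. For pairs of trajectories $(\boldsymbol{x},\boldsymbol{u},\boldsymbol{w},\boldsymbol{v},\boldsymbol{y})$, $(\widetilde{\boldsymbol{x}},\boldsymbol{u},\widetilde{\boldsymbol{w}},\widetilde{\boldsymbol{v}},\widetilde{\boldsymbol{y}})$ write $\delta x_k=x_k-\widetilde{x}_k$, $\delta v_k=v_k-\widetilde{v}_k$, $\delta y_k=y_k-\widetilde{y}_k$. There exist $\gamma_0\in\mathcal{KL}$ and $\gamma_v,\gamma_y\in\mathcal{K}$ such that $$\|\delta x_k\|\le\max\big(\gamma_0(\|\delta x_0\|,k),\ \gamma_v(\|\delta\boldsymbol{v}\|_{[0,k-1]}),\ \gamma_y(\|\delta\boldsymbol{y}\|_{[0,k-1]})\big)$$ for all $k\ge0$ and all such pairs of trajectories, if and only if there exist $\overline{\gamma}_0,\overline{\gamma}_v,\overline{\gamma}_y\in\mathcal{KL}$ such that $$\|\delta x_k\|\le\max\Big(\max_{j\in\{0,\dots,k-1\}}\overline{\gamma}_v(\|\delta v_j\|,k-j-1),\ \overline{\gamma}_0(\|\delta x_0\|,k),\ \max_{j\in\{0,\dots,k-1\}}\overline{\gamma}_y(\|\delta y_j\|,k-j-1)\Big)$$ for all $k\ge0$ and all such pairs of trajectories.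
   Context: $\|\boldsymbol{x}\|_{[a,b]}:=\max_{i\in\{a,\dots,b\}}\|x_i\|$. $\mathcal{K}$ and $\mathcal{KL}$ are the usual comparison function classes: $\alpha\in\mathcal{K}$ if continuous, strictly increasing, $\alpha(0)=0$; $\beta\in\mathcal{KL}$ if $\beta(\cdot,k)\in\mathcal{K}$ for each $k$ and $\beta(r,\cdot)$ is non-increasing with limit $0$. A trajectory is a sequence satisfying the system equations for all $k$. *)

From HB Require Import structures.
From mathcomp Require Import all_boot all_order all_algebra.
From mathcomp Require Import all_classical all_reals all_analysis.
Set Implicit Arguments. Unset Strict Implicit. Unset Printing Implicit Defensive.
Import Order.TTheory GRing.Theory Num.Theory.
Import numFieldNormedType.Exports.
Local Open Scope classical_set_scope.
Local Open Scope ring_scope.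

Definition classK {R : realType} (a : R -> R) : Prop :=
  [/\ {within [set r : R | 0 <= r], continuous a},
      (forall r s : R, 0 <= r -> r < s -> a r < a s) &
      a 0 = 0].

Definition classKL {R : realType} (b : R -> nat -> R) : Prop :=
  [/\ (forall k : nat, classK (fun r => b r k)),
      (forall r : R, 0 <= r -> forall k : nat, b r k.+1 <= b r k) &
      (forall r : R, 0 <= r -> (fun k => b r k) @ \oo --> (0 : R))].

(* ||z||_[0, k-1] = max_{i in {0..k-1}} ||z_i||  (= 0 when k = 0) *)
Definition supnorm {R : realType} {Z : normedModType R} (z : nat -> Z) (k : nat) : R :=
  \big[Num.max/0]_(i < k) `|z i|.

Definition is_traj {X U W V Y : Type}
  (XX : set X) (UU : set U) (WW : set W) (VV : set V) (YY : set Y)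
  (F : X -> U -> W -> V -> X) (H : X -> U -> W -> V -> Y)
  (x : nat -> X) (u : nat -> U) (w : nat -> W) (v : nat -> V) (y : nat -> Y) : Prop :=
  forall k : nat,
    [/\ XX (x k), UU (u k), WW (w k), VV (v k) & YY (y k)] /\
    x k.+1 = F (x k) (u k) (w k) (v k) /\
    y k = H (x k) (u k) (w k) (v k).

(* From the discounted estimate, the KL-estimate follows with gamma(r) := gamma_bar(r, 0),
   since gamma_bar is nonincreasing in time.

   Conversely, let beta := gamma_0. We build a continuous, strictly increasing rho <= id
   whose iterates tend to 0, but more slowly than beta settles: for every L > 0 there is
   m >= 1 with beta(2L, m) <= L and rho^m(L) >= L/2. Then rho = id - eps, where eps is the
   1/2-Lipschitz minorant of s |-> s / (4 (N(s) + 1)) and N(s) is the first time at which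
   beta(8s, .) <= s/2. All three discounted gains are 2 rho^t (G r) with
   G := max(beta(., 0), gamma_v, gamma_y), and the discounted bound at time k follows by
   strong induction on k. Let L be its right-hand side and m the time above; note that
   2 rho^t(r) <= L with t <= m forces r <= L. If k <= m, the original estimate from time 0
   already gives |dx_k| <= L. Otherwise, by time invariance, restart the estimate at time
   k - m: by induction |dx_(k-m)| <= 2L, so its beta-term is at most beta(2L, m) <= L. *)

From HB Require Import structures.
From mathcomp Require Import all_boot all_order all_algebra.
From mathcomp Require Import all_classical all_reals all_analysis.
From mathcomp Require Import ring lra zify.
Import Order.TTheory GRing.Theory Num.Theory.
Import numFieldNormedType.Exports.
Local Open Scope classical_set_scope.
Local Open Scope ring_scope.
Set Implicit Arguments.
Unset Strict Implicit.

Section ComparisonFunctions.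
Variable R : realType.
Implicit Types (a : R -> R) (b : R -> nat -> R).

Lemma classK_lt a r s : classK a -> 0 <= r -> r < s -> a r < a s.
Proof. by case=> _ + _; apply. Qed.

Lemma classK_le a r s : classK a -> 0 <= r -> r <= s -> a r <= a s.
Proof.
move=> Ka r0; rewrite le_eqVlt => /predU1P[-> //|rs].
exact: ltW (classK_lt Ka r0 rs).
Qed.

Lemma classK_ge0 a r : classK a -> 0 <= r -> 0 <= a r.
Proof. by move=> Ka r0; have [_ _ <-] := Ka; exact: classK_le. Qed.

Lemma classK_max a1 a2 : classK a1 -> classK a2 ->
  classK (fun r => Num.max (a1 r) (a2 r)).
Proof.
move=> [c1 lt1 z1] [c2 lt2 z2]; split.
- by move=> x; apply: continuous_max; [exact: c1 | exact: c2].
- by move=> r s r0 rs; rewrite gt_max !lt_max lt1 // lt2 // orbT.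
- by rewrite z1 z2 maxxx.
Qed.

Lemma le_bigmax_nat n (F : nat -> R) j : (j < n)%N ->
  F j <= \big[Num.max/0]_(i < n) F i.
Proof. by move=> jn; apply: (le_bigmax _ (fun i : 'I_n => F i) (Ordinal jn)). Qed.

Lemma classK_bigmax a n (z : nat -> R) : classK a -> (forall i, 0 <= z i) ->
  a (\big[Num.max/0]_(i < n) z i) = \big[Num.max/0]_(i < n) a (z i).
Proof.
move=> Ka z0.
suff [] : 0 <= \big[Num.max/0]_(i < n) z i /\
  a (\big[Num.max/0]_(i < n) z i) = \big[Num.max/0]_(i < n) a (z i) by [].
elim/big_rec2: _ => [|i _ y _ [y0 <-]]; first by have [_ _ ->] := Ka.
split; first by rewrite le_max y0 orbT.
case: (leP (z i) y) => zy.
  by rewrite !max_r //; apply: classK_le.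
by rewrite !max_l ?ltW //; apply: classK_lt.
Qed.

Lemma classK_supnorm (Z : normedModType R) a (z : nat -> Z) k : classK a ->
  a (supnorm z k) = \big[Num.max/0]_(i < k) a `|z i|.
Proof. by move=> Ka; apply: (classK_bigmax k (z := fun i => `|z i|) Ka) => i. Qed.

Lemma classKL_K b n : classKL b -> classK (fun r => b r n).
Proof. by case. Qed.

Lemma classKL_antitone b r m n : classKL b -> 0 <= r -> (m <= n)%N ->
  b r n <= b r m.
Proof.
move=> [_ dec _] r0 /subnK <-; elim: (n - m)%N => [|d IH] //.
by rewrite addSn; apply: le_trans (dec _ r0 _) IH.
Qed.

Lemma classKL_eventually_le b r c : classKL b -> 0 <= r -> 0 < c ->
  exists n, b r n <= c.
Proof.
move=> [_ _ cvg0] r0 c0; have /cvgr0_norm_lt/(_ c c0)[N _ HN] := cvg0 r r0.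
by exists N; apply/ltW/(le_lt_trans (ler_norm _))/HN => /=.
Qed.

(* The first time at which [b r] drops below [c], or 0 if there is none (which cannot
   happen when [b] is of class KL and [c > 0]). *)
Definition settle b r c : nat :=
  if pselect (exists n, b r n <= c) is left ex then ex_minn ex else 0.

Lemma settleP b r c : classKL b -> 0 <= r -> 0 < c ->
  b r (settle b r c) <= c /\ forall n, b r n <= c -> (settle b r c <= n)%N.
Proof.
move=> KLb r0 c0; rewrite /settle; case: pselect => [ex|]; last first.
  by move/(_ (classKL_eventually_le KLb r0 c0)).
by case: ex_minnP.
Qed.

End ComparisonFunctions.

Section SlowContraction.
Variables (R : realType) (b : R -> nat -> R).

Definition margin (s : R) : R := s / (4 * (settle b (8 * s) (s / 2)).+1%:R).

(* Inf-convolution with [|r - s| / 2]: unlike [margin], which jumps with [settle],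
   this is 1/2-Lipschitz, which makes [rho] continuous and strictly increasing. *)
Definition lip_margin (r : R) : R :=
  inf [set margin s + `|r - s| / 2 | s in [set s : R | 0 <= s]].

Definition rho (r : R) : R := r - lip_margin r.

Lemma margin_ge0 s : 0 <= s -> 0 <= margin s.
Proof. by move=> s0; rewrite divr_ge0 // mulr_ge0. Qed.

Lemma margin_le s : 0 <= s -> margin s <= s / 4.
Proof.
move=> s0; rewrite /margin invfM mulrA ler_piMr ?divr_ge0 //.
by rewrite invf_le1 ?ltr0n // ler1n.
Qed.

Lemma lip_margin_le r s : 0 <= s -> lip_margin r <= margin s + `|r - s| / 2.
Proof.
move=> s0; apply: ge_inf; last by exists s.
by exists 0 => _ [t t0 <-]; rewrite addr_ge0 ?margin_ge0 // divr_ge0.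
Qed.

Lemma lip_margin_ge r x :
  (forall s, 0 <= s -> x <= margin s + `|r - s| / 2) -> x <= lip_margin r.
Proof.
move=> le_x; apply: lb_le_inf; first by exists (margin 0 + `|r - 0| / 2); exists 0 => /=.
by move=> _ [s s0 <-]; apply: le_x.
Qed.

Lemma lip_margin_ge0 r : 0 <= lip_margin r.
Proof. by apply: lip_margin_ge => s s0; rewrite addr_ge0 ?margin_ge0 // divr_ge0. Qed.

Lemma lip_margin_lipschitz r1 r2 :
  `|lip_margin r1 - lip_margin r2| <= `|r1 - r2| / 2.
Proof.
have half_lip x y : lip_margin x <= lip_margin y + `|x - y| / 2.
  rewrite -lerBlDr; apply: lip_margin_ge => s s0; rewrite lerBlDr.
  apply: le_trans (lip_margin_le x s0) _; rewrite -addrA lerD2l -mulrDl.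
  rewrite ler_pM2r // (le_trans _ (ler_normD _ _)) //.
  by rewrite [y - s + _]addrC addrA subrK.
have := half_lip r1 r2; have := half_lip r2 r1; rewrite distrC.
by rewrite ler_norml; move=> *; apply/andP; split; lra.
Qed.

Lemma lip_margin_le_quarter r : 0 <= r -> lip_margin r <= r / 4.
Proof.
move=> r0; apply: le_trans (lip_margin_le r r0) _.
by rewrite subrr normr0 mul0r addr0 margin_le.
Qed.

Lemma lip_margin0 : lip_margin 0 = 0.
Proof.
apply/le_anti; rewrite lip_margin_ge0 andbT.
by apply: le_trans (lip_margin_le_quarter (lexx 0)) _; rewrite mul0r.
Qed.

Lemma rho_lt : {homo rho : x y / x < y}.
Proof.
move=> x y xy; have := ler_norm (lip_margin y - lip_margin x).
have := lip_margin_lipschitz y x.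
by rewrite [`|y - x|]gtr0_norm ?subr_gt0 // /rho; lra.
Qed.

Lemma rho_le : {homo rho : x y / x <= y}.
Proof. by move=> x y; rewrite le_eqVlt => /predU1P[-> //|/rho_lt/ltW]. Qed.

Lemma rho_le_id r : rho r <= r.
Proof. by rewrite /rho lerBlDr lerDl lip_margin_ge0. Qed.

Lemma rho0 : rho 0 = 0.
Proof. by rewrite /rho lip_margin0 subr0. Qed.

Lemma continuous_rho : continuous rho.
Proof.
move=> x; apply/cvgrPdist_lt => e e0.
have e2 : 0 < e / 2 by rewrite divr_gt0.
have /cvgr_dist_lt/(_ _ e2) := @cvg_id _ (nbhs x).
apply: filterS => t xt; have := lip_margin_lipschitz x t.
have -> : rho x - rho t = (x - t) - (lip_margin x - lip_margin t).
  by rewrite /rho; lra.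
by move=> lip; apply: le_lt_trans (ler_normB _ _) _; lra.
Qed.

Lemma iter_rho_lt n x y : x < y -> iter n rho x < iter n rho y.
Proof. by elim: n => // n IH /IH /rho_lt. Qed.

Lemma iter_rho_le n x y : x <= y -> iter n rho x <= iter n rho y.
Proof. by elim: n => // n IH /IH /rho_le. Qed.

Lemma iter_rho0 n : iter n rho 0 = 0.
Proof. by elim: n => //= n ->; rewrite rho0. Qed.

Lemma iter_rho_ge0 n x : 0 <= x -> 0 <= iter n rho x.
Proof. by move=> x0; rewrite -(iter_rho0 n); apply: iter_rho_le. Qed.

Lemma iter_rho_antitone m n x : (m <= n)%N -> iter n rho x <= iter m rho x.
Proof.
move=> /subnK <-; rewrite iterD; elim: (n - m)%N => //= d IH.
exact: le_trans (rho_le_id _) IH.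
Qed.

Lemma continuous_iter_rho n : continuous (iter n rho).
Proof.
elim: n => [|n IH] x; first exact: cvg_id.
by have := continuous_comp (IH x) (@continuous_rho (iter n rho x)).
Qed.

Hypothesis KLb : classKL b.

Lemma lip_margin_le_on L z : 0 < L -> L / 2 <= z -> z <= L ->
  lip_margin z <= L / (4 * (settle b (4 * L) (L / 2)).+1%:R).
Proof.
move=> L0 Lz zL; have z0 : 0 < z by lra.
have z8 : 0 <= 8 * z by lra.
have z2 : 0 < z / 2 by lra.
have L4 : 0 <= 4 * L by lra.
have L2 : 0 < L / 2 by lra.
have [settled _] := settleP KLb z8 z2.
have [_ least] := settleP KLb L4 L2.
apply: le_trans (lip_margin_le z (ltW z0)) _.
rewrite subrr normr0 mul0r addr0 /margin ler_pM ?(ltW z0) ?invr_ge0 ?mulr_ge0 //.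
rewrite lef_pV2 ?posrE ?mulr_gt0 ?ltr0n // ler_pM2l // ler_nat ltnS.
apply: least; apply: le_trans (classK_le (classKL_K _ KLb) L4 _)
                              (le_trans settled _); lra.
Qed.

Lemma lip_margin_ge_on e X : 0 < e -> e <= X ->
  exists2 d, 0 < d & forall r, e <= r -> r <= X -> d <= lip_margin r.
Proof.
move=> e0 eX; set K := settle b (16 * X) (e / 4).
have X16 : 0 <= 16 * X by lra.
have e4 : 0 < e / 4 by lra.
have [settledK _] := settleP KLb X16 e4.
have K1 : 1 <= K.+1%:R :> R by rewrite ler1n.
exists (e / 2 / (4 * K.+1%:R)); first by rewrite !divr_gt0 // mulr_gt0.
have d_le : e / 2 / (4 * K.+1%:R) <= e / 8.
  rewrite -mulrA -invfM ler_pM2l // lef_pV2 ?posrE ?mulr_gt0 //; lra.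
move=> r er rX; apply: lip_margin_ge => s s0.
have [far|] := leP (r / 2) `|r - s|.
  by apply: le_trans d_le _; have := margin_ge0 s0; lra.
rewrite ltr_norml => /andP[near1 near2].
have s8 : 0 <= 8 * s by lra.
have s2 : 0 < s / 2 by lra.
have [_ least] := settleP KLb s8 s2.
have sK : (settle b (8 * s) (s / 2) <= K)%N.
  apply: least; apply: le_trans (classK_le (classKL_K _ KLb) s8 _)
                                (le_trans settledK _); lra.
apply: le_trans (_ : margin s <= _); last by rewrite lerDl divr_ge0.
rewrite /margin ler_pM ?divr_ge0 ?invr_ge0 ?mulr_ge0 ?(ltW e0) //; first lra.
by rewrite lef_pV2 ?posrE ?mulr_gt0 ?ltr0n // ler_pM2l // ler_nat ltnS.
Qed.

Lemma cvg_iter_rho x : 0 <= x -> iter n rho x @[n --> \oo] --> 0.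
Proof.
move=> x0; apply/cvgr0Pnorm_lt => e e0.
suff [T small] : exists T, iter T rho x < e.
  exists T => // t /= Tt; rewrite ger0_norm ?iter_rho_ge0 //.
  exact: le_lt_trans (iter_rho_antitone _ Tt) small.
have [xe|ex] := ltP x e; first by exists 0%N.
have [d d0 d_le] := lip_margin_ge_on e0 ex.
exists (Num.Def.archi_bound (x / d)); set T := Num.Def.archi_bound _.
have xT : x < T%:R * d.
  by rewrite -ltr_pdivrMr //; apply: archi_boundP; rewrite divr_ge0 // ltW.
rewrite ltNge; apply/negP => eT.
suff linear_decrease i : (i <= T)%N -> iter i rho x <= x - i%:R * d.
  by have := linear_decrease T (leqnn T); have := iter_rho_ge0 T x0; lra.
elim: i => [|i IH] iT; first by rewrite mul0r subr0.
have := IH (ltnW iT); set z := iter i rho x => zle.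
have ez : e <= z by apply: le_trans eT (iter_rho_antitone _ (ltnW iT)).
have := d_le z ez (iter_rho_antitone x (leq0n i)).
rewrite iterS -/z /rho -[i.+1%:R]natr1 mulrDl mul1r; lra.
Qed.

Lemma iter_rho_settle L : 0 < L -> L / 2 <= iter (settle b (4 * L) (L / 2)).+1 rho L.
Proof.
move=> L0; set m := (settle _ _ _).+1; set d := L / (4 * m%:R).
have md : m%:R * d = L / 4 by rewrite /d; field; rewrite pnatr_eq0.
have d0 : 0 <= d by rewrite divr_ge0 ?mulr_ge0 // ltW.
suff linear_lower i : (i <= m)%N -> L - i%:R * d <= iter i rho L.
  by have := linear_lower m (leqnn m); lra.
elim: i => [|i IH] im; first by rewrite mul0r subr0.
have := IH (ltnW im); set z := iter i rho L => zlow.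
have id_le : i%:R * d <= L / 4 by rewrite -md ler_wpM2r // ler_nat ltnW.
have zL : z <= L := iter_rho_antitone L (leq0n i).
have zhalf : L / 2 <= z by lra.
have := lip_margin_le_on L0 zhalf zL; rewrite -/d.
rewrite iterS -/z /rho -[i.+1%:R]natr1 mulrDl mul1r; lra.
Qed.

Lemma restart_time L k : 0 <= L -> exists m,
  ((k <= m)%N \/ (0 < m)%N /\ b (2 * L) m <= L) /\
  forall x, iter m rho x <= L / 2 -> x <= L.
Proof.
rewrite le_eqVlt => /predU1P[<-|L0].
  exists k; split=> [|x]; first by left.
  rewrite mul0r => small; rewrite leNgt; apply/negP => x0.
  by have := iter_rho_lt k x0; rewrite iter_rho0; lra.
set n := settle b (4 * L) (L / 2); exists n.+1; split.
  right; split=> //.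
  have L4 : 0 <= 4 * L by lra.
  have L2 : 0 < L / 2 by lra.
  have [settled _] := settleP KLb L4 L2.
  apply: le_trans (classKL_antitone KLb _ (leqnSn n)) _; first lra.
  apply: le_trans (classK_le (classKL_K _ KLb) _ _) (le_trans settled _); lra.
move=> x small; rewrite leNgt; apply/negP => Lx.
by have := iter_rho_lt n.+1 Lx; have := iter_rho_settle L0; lra.
Qed.

Definition decay (t : nat) (r : R) : R := 2 * iter t rho r.

Lemma decay_le t : {homo decay t : x y / x <= y}.
Proof. by move=> x y xy; rewrite ler_pM2l // iter_rho_le. Qed.

Lemma decay_ge0 t r : 0 <= r -> 0 <= decay t r.
Proof. by move=> r0; rewrite mulr_ge0 // iter_rho_ge0. Qed.

Lemma decay_max t x y : decay t (Num.max x y) = Num.max (decay t x) (decay t y).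
Proof.
by have [xy|/ltW yx] := leP x y; [rewrite !max_r // | rewrite !max_l //]; apply: decay_le.
Qed.

Lemma continuous_decay t : continuous (decay t).
Proof. by move=> x; apply: cvgMr; apply: continuous_iter_rho. Qed.

Lemma classKL_decay G : classK G -> classKL (fun r t => decay t (G r)).
Proof.
move=> KG; have [cG ltG G0] := KG; split.
- move=> t; split.
  + by move=> x; have := continuous_comp (cG x) (@continuous_decay t (G x)).
  + by move=> r s r0 rs; rewrite ltr_pM2l // iter_rho_lt // ltG.
  + by rewrite G0 /decay iter_rho0 mulr0.
- by move=> r r0 k; rewrite ler_pM2l // iter_rho_antitone.
- move=> r r0; rewrite -(mulr0 2); apply: cvgMr; apply: cvg_iter_rho.
  exact: classK_ge0 KG r0.
Qed.

Lemma fading_memory (a c : nat -> R) :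
  (forall i, 0 <= a i) -> (forall i, 0 <= c i) ->
  (forall s n, a (s + n)%N <=
     Num.max (b (a s) n) (\big[Num.max/0]_(i < n) c (s + i)%N)) ->
  forall k, a k <= Num.max (decay k (b (a 0%N) 0%N))
                           (\big[Num.max/0]_(j < k) decay (k - j - 1) (c j)).
Proof.
move=> a0 c0 restart; elim/ltn_ind => k IH; set L := Num.max _ _.
have init_le : decay k (b (a 0%N) 0%N) <= L by rewrite le_max lexx.
have input_le j : (j < k)%N -> decay (k - j - 1) (c j) <= L.
  by move=> jk; rewrite le_max (le_bigmax_nat (fun j => decay (k - j - 1) (c j))) ?orbT.
have L0 : 0 <= L.
  by apply: le_trans init_le; apply/decay_ge0/(classK_ge0 (classKL_K _ KLb)).
have [m [m_cases recover]] := restart_time k L0.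
have below t x : (t <= m)%N -> decay t x <= L -> x <= L.
  move=> tm; rewrite /decay => dx; apply: recover.
  by have := iter_rho_antitone x tm; lra.
have restart_le s : (s <= k)%N -> (k <= s + m)%N -> b (a s) (k - s) <= L -> a k <= L.
  move=> sk ksm bs; have := restart s (k - s)%N; rewrite subnKC // => /le_trans.
  apply; rewrite ge_max bs; apply: bigmax_le => // i _.
  have ilt := ltn_ord i; apply: (below (k - (s + i) - 1)%N); first lia.
  by apply: input_le; lia.
have [km|mk] := leqP k m.
  apply: (restart_le 0%N) => //.
  apply: (below k) => //; rewrite subn0; apply: le_trans _ init_le; apply: decay_le.
  exact: classKL_antitone KLb (a0 _) (leq0n k).
case: m_cases => [|[m0 settled]]; first by lia.
have shift t x : decay (m + t) x <= L -> decay t x <= 2 * L.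
  rewrite /decay iterD => dx; rewrite ler_pM2l //; apply: recover; lra.
have as_le : a (k - m)%N <= 2 * L.
  apply: le_trans (IH _ _) _; first by lia.
  rewrite ge_max; apply/andP; split.
    by apply: (shift (k - m)%N); rewrite subnKC // ltnW.
  apply: bigmax_le => [|j _]; first lra.
  have jlt := ltn_ord j; apply: (shift (k - m - j - 1)%N).
  have -> : (m + (k - m - j - 1) = k - j - 1)%N by lia.
  by apply: input_le; lia.
apply: (restart_le (k - m)%N); [lia | lia |].
rewrite (_ : k - (k - m) = m)%N; last by lia.
exact: le_trans (classK_le (classKL_K _ KLb) (a0 _) as_le) settled.
Qed.

End SlowContraction.

Lemma is_traj_shift (X U W V Y : Type)
  (XX : set X) (UU : set U) (WW : set W) (VV : set V) (YY : set Y)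
  (F : X -> U -> W -> V -> X) (H : X -> U -> W -> V -> Y)
  (x : nat -> X) (u : nat -> U) (w : nat -> W) (v : nat -> V) (y : nat -> Y) s :
  is_traj XX UU WW VV YY F H x u w v y ->
  is_traj XX UU WW VV YY F H (fun i => x (s + i)%N) (fun i => u (s + i)%N)
    (fun i => w (s + i)%N) (fun i => v (s + i)%N) (fun i => y (s + i)%N).
Proof. by move=> T i; have := T (s + i)%N; rewrite addnS. Qed.

Section IncrementalStability.
Variables (R : realType) (X V Y : normedModType R) (U W : Type)
  (XX : set X) (UU : set U) (WW : set W) (VV : set V) (YY : set Y)
  (F : X -> U -> W -> V -> X) (H : X -> U -> W -> V -> Y).

Definition ioss_bound (g0 : R -> nat -> R) (gv gy : R -> R) : Prop :=
  forall (x xt : nat -> X) (u : nat -> U) (w wt : nat -> W)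
         (v vt : nat -> V) (y yt : nat -> Y),
    is_traj XX UU WW VV YY F H x u w v y ->
    is_traj XX UU WW VV YY F H xt u wt vt yt ->
    forall k : nat,
      `|x k - xt k| <=
        Num.max (g0 `|x 0 - xt 0| k)
          (Num.max (gv (supnorm (fun j => v j - vt j) k))
                   (gy (supnorm (fun j => y j - yt j) k))).

Definition discounted_ioss_bound (g0 gv gy : R -> nat -> R) : Prop :=
  forall (x xt : nat -> X) (u : nat -> U) (w wt : nat -> W)
         (v vt : nat -> V) (y yt : nat -> Y),
    is_traj XX UU WW VV YY F H x u w v y ->
    is_traj XX UU WW VV YY F H xt u wt vt yt ->
    forall k : nat,
      `|x k - xt k| <=
        Num.max (\big[Num.max/0]_(j < k) gv `|v j - vt j| (k - j - 1)%N)
          (Num.max (g0 `|x 0 - xt 0| k)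
                   (\big[Num.max/0]_(j < k) gy `|y j - yt j| (k - j - 1)%N)).

Lemma discounted_ioss_of_ioss g0 gv gy :
  classKL g0 -> classK gv -> classK gy -> ioss_bound g0 gv gy ->
  exists g, classKL g /\ discounted_ioss_bound g g g.
Proof.
move=> KL0 Kv Ky bound.
pose G r := Num.max (g0 r 0%N) (Num.max (gv r) (gy r)).
have KG : classK G by apply: classK_max (classKL_K _ KL0) (classK_max Kv Ky).
exists (fun r t => decay g0 t (G r)); split; first exact: classKL_decay.
move=> x xt u w wt v vt y yt Tx Txt k.
pose c j := Num.max (gv `|v j - vt j|) (gy `|y j - yt j|).
have c0 j : 0 <= c j by rewrite le_max classK_ge0.
have restart s n : `|x (s + n)%N - xt (s + n)%N| <=
    Num.max (g0 `|x s - xt s| n) (\big[Num.max/0]_(i < n) c (s + i)%N).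
  have := bound _ _ _ _ _ _ _ _ _ (is_traj_shift s Tx) (is_traj_shift s Txt) n.
  by rewrite /= addn0 (classK_supnorm _ _ Kv) (classK_supnorm _ _ Ky) -bigmax_split.
apply: le_trans (fading_memory KL0 (fun i => normr_ge0 _) c0 restart k) _.
rewrite maxCA -bigmax_split; apply: le_max2.
  by apply: decay_le; rewrite le_max lexx.
apply: le_bigmax2 => j _; rewrite -decay_max; apply: decay_le.
by apply: le_max2; rewrite /G !le_max lexx ?orbT.
Qed.

Lemma ioss_of_discounted_ioss g0 gv gy :
  classKL gv -> classKL gy -> discounted_ioss_bound g0 gv gy ->
  ioss_bound g0 (fun r => gv r 0%N) (fun r => gy r 0%N).
Proof.
move=> KLv KLy bound x xt u w wt v vt y yt Tx Txt k.
apply: le_trans (bound _ _ _ _ _ _ _ _ _ Tx Txt k) _.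
have discount_le g (Z : normedModType R) (z : nat -> Z) : classKL g ->
    \big[Num.max/0]_(j < k) g `|z j| (k - j - 1)%N <= g (supnorm z k) 0%N.
  move=> KLg; rewrite (classK_supnorm _ _ (classKL_K 0 KLg)).
  by apply: le_bigmax2 => j _; apply: classKL_antitone KLg (normr_ge0 _) (leq0n _).
rewrite maxCA; apply: le_max2 => //.
by apply: le_max2; apply: discount_le.
Qed.

End IncrementalStability.

Unset Implicit Arguments.

Theorem proposition2 (R : realType) (X V Y : normedModType R) (U W : Type)
  (XX : set X) (UU : set U) (WW : set W) (VV : set V) (YY : set Y)
  (F : X -> U -> W -> V -> X) (H : X -> U -> W -> V -> Y) :
  (exists (g0 : R -> nat -> R) (gv gy : R -> R),
     [/\ classKL g0, classK gv, classK gy &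
       forall (x xt : nat -> X) (u : nat -> U) (w wt : nat -> W)
              (v vt : nat -> V) (y yt : nat -> Y),
         is_traj XX UU WW VV YY F H x u w v y ->
         is_traj XX UU WW VV YY F H xt u wt vt yt ->
         forall k : nat,
           `|x k - xt k| <=
             Num.max (g0 `|x 0 - xt 0| k)
               (Num.max (gv (supnorm (fun j => v j - vt j) k))
                        (gy (supnorm (fun j => y j - yt j) k)))])
  <->
  (exists (g0 gv gy : R -> nat -> R),
     [/\ classKL g0, classKL gv, classKL gy &
       forall (x xt : nat -> X) (u : nat -> U) (w wt : nat -> W)
              (v vt : nat -> V) (y yt : nat -> Y),
         is_traj XX UU WW VV YY F H x u w v y ->
         is_traj XX UU WW VV YY F H xt u wt vt yt ->
         forall k : nat,
           `|x k - xt k| <=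
             Num.max (\big[Num.max/0]_(j < k) gv `|v j - vt j| (k - j - 1)%N)
               (Num.max (g0 `|x 0 - xt 0| k)
                        (\big[Num.max/0]_(j < k) gy `|y j - yt j| (k - j - 1)%N))]).
Proof.
split=> [[g0 [gv [gy [KL0 Kv Ky bound]]]] | [g0 [gv [gy [KL0 KLv KLy bound]]]]].
  have [g [KLg discounted]] := discounted_ioss_of_ioss KL0 Kv Ky bound.
  by exists g, g, g.
exists g0, (fun r => gv r 0%N), (fun r => gy r 0%N).
split=> //; [exact: classKL_K | exact: classKL_K | exact: ioss_of_discounted_ioss].
Qed.
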